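(* Let $W$ be a channel over the alphabet $\mathcal{X}$. If $W$ admits a decision chain of length $r\ge 3$, then there is no metric on $\mathcal{X}$ matched to $W$.
   Context: A channel $W:\mathcal{X}\to\mathcal{X}$ is given by a conditional probability distribution $\Pr:\mathcal{X}\times\mathcal{X}\to\mathbb{R}$, where $\Pr(x\mid y)=\Pr(x\text{ received}\mid y\text{ sent})\ge 0$ and $\sum_{x}\Pr(x\mid y)=1$ for every $y$. All codewords are assumed equally likely. A channel $W$ and a metric $d$ on $\mathcal{X}$ are matched if for every (nonempty) code $C\subseteq\mathcal{X}$ and every $x\in\mathcal{X}$, $\operatorname{argmax}_{y\in C}\Pr(x\mid y)=\operatorname{argmin}_{y\in C}d(x,y)$ (equality of sets). For $x\in\mathcal{X}$ and $0\le t\le 1$, the $t$-decision region centered at $x$ is $B^t(x)=\{y\in\mathcal{X}:\Pr(x\mid y)\ge t\}$. Elements $x_0,x_1,\dots,x_{r-1}\in\mathcal{X}$ form a decision chain of length $r$ on $W$ if there are real numbers $t_0,\dots,t_{r-1}>0$ such that for every $i$ (indices taken modulo $r$): $x_{i+1}\in B^{t_i}(x_i)$ (forward inclusion) and $x_i\notin B^{t_{i+1}}(x_{i+1})$ (backward exclusion). *)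

From HB Require Import structures.
From mathcomp Require Import all_boot all_order all_algebra.
From mathcomp Require Import reals.
Set Implicit Arguments. Unset Strict Implicit. Unset Printing Implicit Defensive.
Import Order.TTheory GRing.Theory Num.Theory.
Local Open Scope ring_scope.

(* W x y = Pr(x received | y sent) *)
Definition is_channel (R : realType) (X : finType) (W : X -> X -> R) : Prop :=
  (forall x y, 0 <= W x y) /\ (forall y, \sum_(x : X) W x y = 1).

Definition is_metric (R : realType) (X : finType) (d : X -> X -> R) : Prop :=
  (forall x y, 0 <= d x y) /\
  (forall x y, d x y = 0 <-> x = y) /\
  (forall x y, d x y = d y x) /\
  (forall x y z, d x z <= d x y + d y z).

Definition argmax_in (R : realType) (X : finType) (C : {set X}) (f : X -> R)
  : {set X} := [set y in C | [forall z in C, f z <= f y]].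

Definition argmin_in (R : realType) (X : finType) (C : {set X}) (f : X -> R)
  : {set X} := [set y in C | [forall z in C, f y <= f z]].

Definition matched (R : realType) (X : finType) (W : X -> X -> R)
  (d : X -> X -> R) : Prop :=
  forall (C : {set X}) (x : X), C != set0 ->
    argmax_in C (fun y => W x y) = argmin_in C (fun y => d x y).

Definition decision_region (R : realType) (X : finType) (W : X -> X -> R)
  (t : R) (x : X) : {set X} := [set y | t <= W x y].

(* indices modulo r via ordS *)
Definition decision_chain (R : realType) (X : finType) (W : X -> X -> R)
  (r : nat) (xs : 'I_r -> X) (ts : 'I_r -> R) : Prop :=
  forall i : 'I_r,
    0 < ts i /\
    xs (ordS i) \in decision_region W (ts i) (xs i) /\
    xs i \notin decision_region W (ts (ordS i)) (xs (ordS i)).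

Definition admits_decision_chain (R : realType) (X : finType) (W : X -> X -> R)
  (r : nat) : Prop :=
  exists (xs : 'I_r -> X) (ts : 'I_r -> R), decision_chain W xs ts.

From HB Require Import structures.
From mathcomp Require Import all_boot all_order all_algebra.
From mathcomp Require Import reals.
Import Order.TTheory GRing.Theory Num.Theory.
Local Open Scope ring_scope.

(* Along a decision chain, x_{i+1} is strictly more likely to have been sent from x_{i+2}
   than from x_i; a matched metric therefore makes d(x_i, x_{i+1}) strictly decrease
   around the cycle, which is absurd. *)

Lemma matched_ltW (R : realType) (X : finType) (W d : X -> X -> R) (x y z : X) :
  matched W d -> W x y < W x z -> d x z < d x y.
Proof.
move=> hm ltW; rewrite ltNge; apply/negP => le_d.
have /setP/(_ y) : argmax_in [set y; z] (W x) = argmin_in [set y; z] (d x).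
  by apply: hm; apply/set0Pn; exists y; rewrite !inE eqxx.
rewrite !inE eqxx /=.
have -> : [forall w in [set y; z], d x y <= d x w].
  by apply/forall_inP => w; rewrite !inE => /orP[] /eqP ->.
move/forall_inP/(_ z); rewrite !inE eqxx orbT => /(_ isT).
by rewrite leNgt ltW.
Qed.

Lemma decision_chain_ltW (R : realType) (X : finType) (W : X -> X -> R) (r : nat)
    (xs : 'I_r -> X) (ts : 'I_r -> R) (i : 'I_r) :
  decision_chain W xs ts ->
  W (xs (ordS i)) (xs i) < W (xs (ordS i)) (xs (ordS (ordS i))).
Proof.
move=> hc; have [_ [_ excl]] := hc i; have [_ [incl _]] := hc (ordS i).
by move: excl incl; rewrite !inE -ltNge; apply: lt_le_trans.
Qed.

Lemma no_ordS_decreasing (disp : Order.disp_t) (T : orderType disp) (r : nat)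
    (f : 'I_r -> T) :
  (0 < r)%N -> ~ (forall i, (f (ordS i) < f i)%O).
Proof.
move=> r_gt0 decr; have i0 : 'I_r := Ordinal r_gt0.
have [j _ min_j] := @arg_minP _ T 'I_r i0 xpredT f isT.
by have := min_j (ordS j) isT; rewrite leNgt decr.
Qed.

Theorem mainTheorem3 (R : realType) (X : finType) (W : X -> X -> R) (r : nat) :
  is_channel W -> (3 <= r)%N -> admits_decision_chain W r ->
  ~ (exists d : X -> X -> R, is_metric d /\ matched W d).
Proof.
move=> _ r_ge3 [xs [ts chain]] [d [[_ [_ [d_sym _]]] hm]].
apply: (@no_ordS_decreasing _ _ r (fun i => d (xs i) (xs (ordS i)))).
  exact: leq_trans r_ge3.
move=> i /=; rewrite (d_sym (xs i)).
by apply: matched_ltW hm _; apply: decision_chain_ltW chain.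
Qed.
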